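(* There is an absolute constant $c>0$ such that for every sufficiently large positive integer $n$ the following holds. Let $f=f_n:\mathbb{R}\to\mathbb{R}$ be the continuous function which equals $1$ on $[\frac{1}{n},1-\frac{1}{n}]$, equals $-1$ on $[-1+\frac{1}{n},-\frac{1}{n}]$, equals $0$ for $|t|\geq 1$, and is linear on each of the intervals $[-1,-1+\frac{1}{n}]$, $[-\frac{1}{n},\frac{1}{n}]$ and $[1-\frac{1}{n},1]$. Then $$\bigg|\,\mathrm{p.v.}\int_{\mathbb{R}} e^{if(t)}\frac{dt}{t}\bigg| \geq c \log n.$$
   Context: The principal value integral is $\mathrm{p.v.}\int_{\mathbb{R}} e^{if(t)}\frac{dt}{t}=\lim_{\epsilon\to 0^+,\,R\to\infty}\int_{\epsilon\leq |t|\leq R} e^{if(t)}\frac{dt}{t}$. *)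

From Stdlib Require Import Reals Lra.
From Coquelicot Require Import Coquelicot.
Open Scope R_scope.

Definition fn (n : nat) (t : R) : R :=
  let N := INR n in
  if Rle_dec 1 (Rabs t) then 0
  else if Rle_dec t (-1 + / N) then - (N * (t + 1))
  else if Rle_dec t (- / N) then -1
  else if Rle_dec t (/ N) then N * t
  else if Rle_dec t (1 - / N) then 1
  else N * (1 - t).

Definition cexpi (theta : R) : C := (cos theta, sin theta).

Definition pv_integrand (f : R -> R) (t : R) : C := scal (/ t) (cexpi (f t)).

Definition trunc_int (f : R -> R) (eps Rb : R) : C :=
  plus (RInt (V:=C_R_CompleteNormedModule) (pv_integrand f) (- Rb) (- eps)) (RInt (V:=C_R_CompleteNormedModule) (pv_integrand f) eps Rb).

Definition pv_integral_is (f : R -> R) (L : C) : Prop :=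
  forall delta : R, 0 < delta ->
    exists eta : R, 0 < eta /\ exists M : R,
      forall eps Rb : R, 0 < eps -> eps < eta -> M < Rb ->
        Cmod (minus (trunc_int f eps Rb) L) < delta.

From Stdlib Require Import Reals Lra.
From Coquelicot Require Import Coquelicot.
Open Scope R_scope.

(* Since f_n is odd, the real parts of the two halves of the truncated integral
   cancel and the imaginary parts agree, so the p.v. integral is
   2i * int_0^1 sin (f_n t) / t dt.  This integrand is nonnegative on (0, 1] and
   bounded by n on (0, 1/n], which gives convergence at rate O(n eps).  On the
   plateau [1/n, 1 - 1/n] it equals sin 1 / t, contributing sin 1 * ln (n - 1),
   and ln n <= 2 ln (n - 1) for n >= 3. *)

Lemma inv_INR_bounds n : 2 <= INR n -> 0 < / INR n <= / 2.
Proof. intros Hn. split; [apply Rinv_0_lt_compat|apply Rinv_le_contravar]; lra. Qed.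

Section Shape.
Variable n : nat.
Hypothesis Hn : 2 <= INR n.

Local Ltac fn_cases :=
  pose proof (inv_INR_bounds n Hn);
  assert (INR n * / INR n = 1) by (field; lra);
  unfold fn; set (a := / INR n) in *;
  repeat match goal with |- context [Rle_dec ?x ?y] => destruct (Rle_dec x y) end;
  repeat match goal with H : context [Rabs ?x] |- _ => unfold Rabs in H; destruct (Rcase_abs x) end;
  try lra; nra.

Lemma fn_ramp t : 0 <= t <= / INR n -> fn n t = INR n * t.
Proof. intros; fn_cases. Qed.

Lemma fn_plateau t : / INR n <= t <= 1 - / INR n -> fn n t = 1.
Proof. intros; fn_cases. Qed.

Lemma fn_end_ramp t : 1 - / INR n <= t <= 1 -> fn n t = INR n * (1 - t).
Proof. intros; fn_cases. Qed.

Lemma fn_outside t : 1 <= t -> fn n t = 0.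
Proof. intros; fn_cases. Qed.

Lemma fn_odd t : fn n (- t) = - fn n t.
Proof. unfold fn at 1; rewrite Rabs_Ropp. fn_cases. Qed.

Lemma fn_range t : 0 <= t -> 0 <= fn n t <= 1.
Proof. intros; fn_cases. Qed.
End Shape.

Section Integrability.
Variable phi : R -> R.
Hypothesis phi_cont : forall x, continuity_pt phi x.

Lemma ex_RInt_affine_comp_div al be a b :
  0 < a -> a <= b -> ex_RInt (fun t => phi (al * t + be) / t) a b.
Proof.
  intros Ha Hab. apply (ex_RInt_continuous (V:=R_CompleteNormedModule)).
  intros z Hz. rewrite Rmin_left, Rmax_right in Hz by lra.
  apply continuity_pt_filterlim, continuity_pt_div; [| |lra].
  - apply (continuity_pt_comp (fun t => al * t + be) phi); [|apply phi_cont].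
    apply derivable_continuous_pt; reg.
  - apply derivable_continuous_pt; reg.
Qed.

Variable n : nat.
Hypothesis Hn : 2 <= INR n.

Let ex_RInt_fn_piece al be a b : 0 < a -> a <= b ->
  (forall t, a <= t <= b -> fn n t = al * t + be) ->
  ex_RInt (fun t => phi (fn n t) / t) a b.
Proof.
  intros Ha Hab Hf.
  apply (ex_RInt_ext (fun t => phi (al * t + be) / t)).
  - intros t Ht. rewrite Rmin_left, Rmax_right in Ht by lra. now rewrite Hf by lra.
  - now apply ex_RInt_affine_comp_div.
Qed.

Lemma ex_RInt_comp_fn_div e b : 0 < e -> e <= / INR n -> 1 <= b ->
  ex_RInt (fun t => phi (fn n t) / t) e b.
Proof.
  intros He Hea Hb.
  pose proof (inv_INR_bounds n Hn).
  apply ex_RInt_Chasles with (/ INR n).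
  { apply (ex_RInt_fn_piece (INR n) 0); [lra..|].
    intros t Ht. rewrite fn_ramp by lra. ring. }
  apply ex_RInt_Chasles with (1 - / INR n).
  { apply (ex_RInt_fn_piece 0 1); [lra..|].
    intros t Ht. rewrite fn_plateau by lra. ring. }
  apply ex_RInt_Chasles with 1.
  { apply (ex_RInt_fn_piece (- INR n) (INR n)); [lra..|].
    intros t Ht. rewrite fn_end_ramp by lra. ring. }
  apply (ex_RInt_fn_piece 0 0); [lra..|].
  intros t Ht. rewrite fn_outside by lra. ring.
Qed.
End Integrability.

Lemma pv_integrand_eq f t : pv_integrand f t = (cos (f t) / t, sin (f t) / t).
Proof.
  unfold pv_integrand, cexpi, Rdiv. now rewrite !(Rmult_comm _ (/ t)).
Qed.

Lemma trunc_int_odd f eps Rb :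
  (forall t, f (- t) = - f t) -> 0 < eps <= Rb ->
  ex_RInt (fun t => cos (f t) / t) eps Rb ->
  ex_RInt (fun t => sin (f t) / t) eps Rb ->
  trunc_int f eps Rb = (0, 2 * RInt (fun t => sin (f t) / t) eps Rb).
Proof.
  intros f_odd Heps Ec Es.
  set (gc := fun t => cos (f t) / t). set (gs := fun t => sin (f t) / t).
  set (Ic := RInt gc eps Rb). set (Is := RInt gs eps Rb).
  assert (Hpos : is_RInt (V:=C_R_CompleteNormedModule) (pv_integrand f) eps Rb (Ic, Is)).
  { apply (is_RInt_ext (V:=C_R_CompleteNormedModule) (fun t => (gc t, gs t))).
    - intros t _. now rewrite pv_integrand_eq.
    - exact (is_RInt_fct_extend_pair (U:=R_NormedModule) (V:=R_NormedModule)
               (fun t => (gc t, gs t)) eps Rb Ic Is (RInt_correct _ _ _ Ec) (RInt_correct _ _ _ Es)). }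
  assert (Hneg : is_RInt (V:=C_R_CompleteNormedModule) (pv_integrand f) (- Rb) (- eps) (- Ic, Is)).
  { apply (is_RInt_ext (V:=C_R_CompleteNormedModule) (fun y => opp (opp (pv_integrand f (- - y))))).
    - intros y _. now rewrite opp_opp, Ropp_involutive.
    - apply (is_RInt_comp_opp (V:=C_R_CompleteNormedModule) (fun t => opp (pv_integrand f (- t)))).
      rewrite !Ropp_involutive.
      apply (is_RInt_ext (V:=C_R_CompleteNormedModule) (fun t => (gc t, - gs t))).
      + intros t Ht. rewrite Rmin_right, Rmax_left in Ht by lra.
        rewrite pv_integrand_eq, f_odd, cos_neg, sin_neg. unfold gc, gs, opp; simpl.
        unfold Copp; simpl. f_equal; field; lra.
      + apply (is_RInt_fct_extend_pair (U:=R_NormedModule) (V:=R_NormedModule)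
                 (fun t => (gc t, - gs t)) Rb eps (- Ic) Is); simpl.
        * apply (is_RInt_swap (V:=R_NormedModule)), (RInt_correct (V:=R_CompleteNormedModule)), Ec.
        * rewrite <- (opp_opp Is). apply (is_RInt_swap (V:=R_NormedModule)).
          apply (is_RInt_opp (V:=R_NormedModule) gs), (RInt_correct (V:=R_CompleteNormedModule)), Es. }
  unfold trunc_int. rewrite (is_RInt_unique _ _ _ _ Hpos), (is_RInt_unique _ _ _ _ Hneg).
  unfold plus; simpl. unfold prod_plus, plus; simpl. f_equal; simpl; fold Is; ring.
Qed.

Section ImproperAtZero.
Variables (h : R -> R) (a b M : R).
Hypothesis Hab : 0 < a <= b.
Hypothesis h_int : forall e, 0 < e <= a -> ex_RInt h e b.
Hypothesis h_bound : forall t, 0 < t <= a -> 0 <= h t <= M.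

Let RInt_lower_shift e' e : 0 < e' <= e -> e <= a ->
  RInt h e b <= RInt h e' b <= RInt h e b + M * (e - e').
Proof.
  intros He' He.
  assert (Hpiece : ex_RInt h e' e).
  { apply (ex_RInt_Chasles_1 (V:=R_CompleteNormedModule) _ _ _ b); [lra|apply h_int; lra]. }
  rewrite <- (RInt_Chasles (V:=R_CompleteNormedModule) h e' e b Hpiece) by (apply h_int; lra).
  assert (Hlow : 0 <= RInt h e' e).
  { apply RInt_ge_0; [lra|exact Hpiece|]. intros t Ht. apply h_bound; lra. }
  assert (Hup : Rabs (RInt h e' e) <= (e - e') * M).
  { apply abs_RInt_le_const; [lra|exact Hpiece|].
    intros t Ht. assert (Hh := h_bound t ltac:(lra)). rewrite Rabs_pos_eq; lra. }
  rewrite Rabs_pos_eq in Hup by lra. unfold plus; simpl. lra.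
Qed.

(* The truncations increase as [e] decreases, so their supremum is the limit. *)
Lemma ex_improper_RInt_at_0 :
  exists S, forall e, 0 < e <= a -> RInt h e b <= S <= RInt h e b + M * e.
Proof.
  assert (HM : 0 <= M) by (destruct (h_bound a); lra).
  set (E := fun x : R => exists e, 0 < e <= a /\ x = RInt h e b).
  assert (Hub : forall e, 0 < e <= a -> forall x, E x -> x <= RInt h e b + M * e).
  { intros e He x [e' [He' ->]].
    destruct (Rle_lt_dec e' e).
    - destruct (RInt_lower_shift e' e); [lra..|]. nra.
    - destruct (RInt_lower_shift e e'); [lra..|]. nra. }
  destruct (completeness E) as [S [S_ub S_lub]].
  - exists (RInt h a b + M * a). intros x Hx. apply Hub; [lra|exact Hx].
  - exists (RInt h a b), a. split; [lra|reflexivity].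
  - exists S. intros e He. split.
    + apply S_ub. exists e. split; [exact He|reflexivity].
    + apply S_lub. intros x Hx. now apply Hub.
Qed.
End ImproperAtZero.

Lemma pv_integral_is_of_rate f L a K M0 : 0 < a -> 0 <= K ->
  (forall eps Rb, 0 < eps < a -> M0 < Rb -> Cmod (minus (trunc_int f eps Rb) L) <= K * eps) ->
  pv_integral_is f L.
Proof.
  intros Ha HK Hrate delta Hdelta.
  assert (Hq : 0 < delta / (K + 1)) by (apply Rdiv_lt_0_compat; lra).
  exists (Rmin a (delta / (K + 1))). split; [now apply Rmin_pos|].
  exists M0. intros eps Rb Heps Heta HRb.
  pose proof (Rmin_l a (delta / (K + 1))). pose proof (Rmin_r a (delta / (K + 1))).
  apply Rle_lt_trans with (K * eps); [apply Hrate; lra|].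
  assert (Hlt : eps * (K + 1) < delta).
  { replace delta with (delta / (K + 1) * (K + 1)) by (field; lra).
    apply Rmult_lt_compat_r; lra. }
  nra.
Qed.

Lemma Cmod_imag y : Cmod (0, y) = Rabs y.
Proof.
  unfold Cmod; simpl. rewrite <- sqrt_Rsqr_abs. f_equal. unfold Rsqr. ring.
Qed.

Lemma minus_imag (x y : R) : minus (G:=C_AbelianGroup) (0, x) (0, y) = (0, x - y).
Proof.
  unfold minus, plus, opp; simpl. unfold Cplus, Copp; simpl. f_equal; ring.
Qed.

Section SineIntegral.
Variable n : nat.
Hypothesis Hn : 2 <= INR n.

Lemma sin_fn_div_nonneg t : 0 < t -> 0 <= sin (fn n t) / t.
Proof.
  intros Ht. destruct (fn_range n Hn t) as [H0 H1]; [lra|].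
  apply Rdiv_le_0_compat; [|lra]. apply sin_ge_0; [lra|]. pose proof PI2_1; lra.
Qed.

Lemma sin_fn_div_le_n t : 0 < t <= / INR n -> sin (fn n t) / t <= INR n.
Proof.
  intros Ht. rewrite fn_ramp by lra.
  assert (Hnt : 0 < INR n * t).
  { apply Rmult_lt_0_compat; lra. }
  apply Rle_div_l; [lra|]. left. now apply sin_lt_x.
Qed.

Lemma RInt_sin_fn_div_tail eps Rb : 0 < eps <= / INR n -> 1 <= Rb ->
  RInt (fun t => sin (fn n t) / t) eps Rb = RInt (fun t => sin (fn n t) / t) eps 1.
Proof.
  intros Heps HRb. pose proof (inv_INR_bounds n Hn).
  rewrite <- (RInt_Chasles (V:=R_CompleteNormedModule) _ eps 1 Rb).
  - rewrite (RInt_ext (V:=R_CompleteNormedModule) _ (fun _ => 0) 1 Rb).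
    + rewrite RInt_const, Rmult_0_r. apply (plus_zero_r (G:=R_AbelianGroup)).
    + intros x Hx. rewrite Rmin_left, Rmax_right in Hx by lra.
      rewrite fn_outside by (auto; lra). rewrite sin_0. apply Rmult_0_l.
  - apply ex_RInt_comp_fn_div; auto using continuity_sin; lra.
  - apply (ex_RInt_Chasles_2 (V:=R_CompleteNormedModule) _ eps); [lra|].
    apply ex_RInt_comp_fn_div; auto using continuity_sin; lra.
Qed.

Lemma trunc_int_fn eps Rb : 0 < eps <= / INR n -> 1 <= Rb ->
  trunc_int (fn n) eps Rb = (0, 2 * RInt (fun t => sin (fn n t) / t) eps 1).
Proof.
  intros Heps HRb. pose proof (inv_INR_bounds n Hn).
  rewrite trunc_int_odd; [|apply fn_odd; exact Hn|lra| |].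
  - now rewrite RInt_sin_fn_div_tail.
  - apply ex_RInt_comp_fn_div; auto using continuity_cos; lra.
  - apply ex_RInt_comp_fn_div; auto using continuity_sin; lra.
Qed.

Lemma RInt_sin_fn_div_lower :
  sin 1 * ln (INR n - 1) <= RInt (fun t => sin (fn n t) / t) (/ INR n) 1.
Proof.
  pose proof (inv_INR_bounds n Hn).
  rewrite <- (RInt_Chasles (V:=R_CompleteNormedModule) _ (/ INR n) (1 - / INR n) 1).
  2: apply (ex_RInt_Chasles_1 (V:=R_CompleteNormedModule) _ _ _ 1); [lra|].
  2, 3: apply (ex_RInt_Chasles_2 (V:=R_CompleteNormedModule) _ (/ INR n)); [lra|].
  2, 3: apply ex_RInt_comp_fn_div; auto using continuity_sin; lra.
  assert (Hplateau : RInt (fun t => sin (fn n t) / t) (/ INR n) (1 - / INR n)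
                     = sin 1 * ln (1 - / INR n) - sin 1 * ln (/ INR n)).
  { rewrite (RInt_ext (V:=R_CompleteNormedModule) _ (fun t => sin 1 / t)).
    - apply is_RInt_unique, (is_RInt_derive (V:=R_CompleteNormedModule) (fun t => sin 1 * ln t)).
      + intros x Hx. rewrite Rmin_left, Rmax_right in Hx by lra.
        auto_derive; [lra|]. field; lra.
      + intros x Hx. rewrite Rmin_left, Rmax_right in Hx by lra.
        apply (ex_derive_continuous (K:=R_AbsRing) (V:=R_NormedModule)). auto_derive. lra.
    - intros x Hx. rewrite Rmin_left, Rmax_right in Hx by lra.
      now rewrite fn_plateau by (auto; lra). }
  assert (Hend : 0 <= RInt (fun t => sin (fn n t) / t) (1 - / INR n) 1).
  { apply RInt_ge_0; [lra| |intros; apply sin_fn_div_nonneg; lra].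
    apply (ex_RInt_Chasles_2 (V:=R_CompleteNormedModule) _ (/ INR n)); [lra|].
    apply ex_RInt_comp_fn_div; auto using continuity_sin; lra. }
  assert (Hln : ln (1 - / INR n) - ln (/ INR n) = ln (INR n - 1)).
  { replace (1 - / INR n) with ((INR n - 1) * / INR n) by (field; lra).
    rewrite ln_mult; [ring|lra|apply Rinv_0_lt_compat; lra]. }
  rewrite Hplateau. unfold plus; simpl. rewrite <- Hln. lra.
Qed.
End SineIntegral.

Lemma ln_le_twice_ln_pred x : 3 <= x -> ln x <= 2 * ln (x - 1).
Proof.
  intros Hx. replace (2 * ln (x - 1)) with (ln ((x - 1) * (x - 1))) by (rewrite ln_mult by lra; ring).
  apply ln_le; nra.
Qed.

Theorem lemma1 :
  exists c : R, 0 < c /\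
    exists N0 : nat, forall n : nat, (N0 <= n)%nat ->
      exists L : C, pv_integral_is (fn n) L /\ c * ln (INR n) <= Cmod L.
Proof.
  assert (Hsin1 : 0 < sin 1) by (apply sin_gt_0; pose proof PI2_1; lra).
  exists (sin 1). split; [exact Hsin1|]. exists 3%nat. intros n Hn.
  assert (H3 : 3 <= INR n) by (apply (le_INR 3) in Hn; simpl in Hn; lra).
  assert (H2 : 2 <= INR n) by lra.
  pose proof (inv_INR_bounds n H2).
  assert (Hint : forall e, 0 < e <= / INR n -> ex_RInt (fun t => sin (fn n t) / t) e 1).
  { intros e He. apply ex_RInt_comp_fn_div; auto using continuity_sin; lra. }
  assert (Hbound : forall t, 0 < t <= / INR n -> 0 <= sin (fn n t) / t <= INR n).
  { intros t Ht. split; [apply sin_fn_div_nonneg|apply sin_fn_div_le_n]; auto; lra. }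
  destruct (ex_improper_RInt_at_0 _ (/ INR n) 1 (INR n) ltac:(lra) Hint Hbound) as [S HS].
  exists (0, 2 * S). split.
  - apply (pv_integral_is_of_rate _ _ (/ INR n) (2 * INR n) 1); [lra..|].
    intros eps Rb Heps HRb.
    rewrite trunc_int_fn, minus_imag, Cmod_imag by lra.
    destruct (HS eps); [lra|]. rewrite Rabs_minus_sym, Rabs_pos_eq; lra.
  - destruct (HS (/ INR n)); [lra|].
    pose proof (RInt_sin_fn_div_lower n H2).
    pose proof (ln_le_twice_ln_pred (INR n) H3).
    assert (0 <= ln (INR n - 1)) by (rewrite <- ln_1; apply ln_le; lra).
    rewrite Cmod_imag, Rabs_pos_eq; nra.
Qed.
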